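(* Let $\bm{A}=[\bm{A}_1\ \bm{A}_2]$ have full column rank with $\bm{A}_j^\top\bm{A}_j=\bm{I}_j$ and $\bm{C}:=\bm{A}_2^\top\bm{A}_1\ne0$. Let $S_{00}:=(0,1]\times(0,1]$, $S_{01}:=(0,1]\times[1,\infty)$, $S_{10}:=[1,\infty)\times(0,1]$. Then $\min_{(\gamma_1,\gamma_2)\in S_{00}}\rho(\bm{M}(\gamma_1,\gamma_2))=\rho(\bm{M}(1,1))$, $\min_{(\gamma_1,\gamma_2)\in S_{01}}\rho(\bm{M}(\gamma_1,\gamma_2))=\min_{\gamma_2\ge1}\rho(\bm{M}(1,\gamma_2))$, and $\min_{(\gamma_1,\gamma_2)\in S_{10}}\rho(\bm{M}(\gamma_1,\gamma_2))=\min_{\gamma_1\ge1}\rho(\bm{M}(\gamma_1,1))$.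
   Context: $\rho$: spectral radius. $\bm{M}(\gamma_1,\gamma_2)=\begin{bmatrix}(1-\gamma_1)\bm{I}_1&-\gamma_1\bm{C}^\top\\-\gamma_2(1-\gamma_1)\bm{C}&(1-\gamma_2)\bm{I}_2+\gamma_1\gamma_2\bm{C}\bm{C}^\top\end{bmatrix}$, the two-block gradient descent iteration matrix with stepsizes $\gamma_1,\gamma_2$ for least squares under $\bm{A}_j^\top\bm{A}_j=\bm{I}_j$. *)

From HB Require Import structures.
From mathcomp Require Import all_boot all_order all_algebra.
From mathcomp Require Import reals.
From mathcomp.real_closed Require Import complex.
Set Implicit Arguments. Unset Strict Implicit. Unset Printing Implicit Defensive.
Import Order.TTheory GRing.Theory Num.Theory.
Local Open Scope ring_scope.

Definition spectral_radius (R : realType) (n : nat) (M : 'M[R]_n) : R :=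
  let p := char_poly (map_mx (fun x : R => (x%:C)%C) M) in
  \big[Num.max/0]_(z <- sval (closed_field_poly_normal p)) Normc.normc z.

(* Two-block gradient-descent iteration matrix M(g1, g2) built from C. *)
Definition gd_iter_mx (R : realType) (n1 n2 : nat) (C : 'M[R]_(n2, n1))
    (g1 g2 : R) : 'M[R]_(n1 + n2) :=
  block_mx ((1 - g1)%:M) (- g1 *: C^T)
           (- (g2 * (1 - g1)) *: C) ((1 - g2)%:M + (g1 * g2) *: (C *m C^T)).

Definition is_min_on (T : Type) (R : realType) (P : T -> Prop) (f : T -> R)
    (v : R) : Prop :=
  (exists x, P x /\ f x = v) /\ (forall x, P x -> v <= f x).

From HB Require Import structures.
From mathcomp Require Import all_boot all_order all_algebra.
From mathcomp Require Import reals.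
From mathcomp.real_closed Require Import complex.
From mathcomp Require Import ring lra.
Set Implicit Arguments. Unset Strict Implicit. Unset Printing Implicit Defensive.
Import Order.TTheory GRing.Theory Num.Theory.
Local Open Scope ring_scope.
Import Normc.

(* An eigenvalue z of M(a, b) is tied to an eigenvalue l of C C^T (or of C^T C)
   by (z - 1 + a) (z - 1 + b) = a b l z, and conversely every root of this
   quadratic is an eigenvalue of M(a, b), with an eigenvector built from one of
   C C^T (or C^T C).  Full column rank of [A1 A2] with orthonormal blocks puts
   these spectra in [0, 1).  On the lines a = 1 and b = 1 the nonzero
   eigenvalues are 1 - g + g l, so rho(M(1, 1)) = l_max and, for
   g = 2 / (2 - l_max - l_min), rho <= (l_max - l_min) / (2 - l_max - l_min).
   Conversely, inside each region some root of the quadratic bounds rho from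
   below: in S00, for each eigenvalue l either a real root exceeds l or the
   product (1 - a) (1 - b) of the two roots is at least l^2; in S01 and S10,
   with h = (l_max - l_min) / (2 - l_max - l_min), the quadratic at l_max is
   nonpositive at h or the one at l_min is nonpositive at -h. *)

Definition gd_quad (R : comPzRingType) (a b l z : R) : R :=
  (z - 1 + a) * (z - 1 + b) - a * b * l * z.

Lemma gd_quadE (R : comPzRingType) (a b l z : R) :
  gd_quad a b l z = z ^+ 2 - (2 - a - b + a * b * l) * z + (1 - a) * (1 - b).
Proof. by rewrite /gd_quad; ring. Qed.

Lemma rmorph_gd_quad (R S : comPzRingType) (f : {rmorphism R -> S}) (a b l z : R) :
  f (gd_quad a b l z) = gd_quad (f a) (f b) (f l) (f z).
Proof. by rewrite /gd_quad !(rmorphB, rmorphD, rmorphM, rmorph1). Qed.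

Lemma gd_quad_root_neq (R : idomainType) (a b l z : R) :
  a != 0 -> b != 0 -> l != 0 -> z != 0 -> gd_quad a b l z = 0 -> z != 1 - a.
Proof.
move=> a0 b0 l0 z0 quad_z; apply/eqP => z_eq.
move: quad_z; rewrite /gd_quad; have -> : z - 1 + a = 0 by rewrite z_eq; ring.
rewrite mul0r sub0r => /eqP; rewrite oppr_eq0 !mulf_eq0.
by rewrite (negbTE a0) (negbTE b0) (negbTE l0) (negbTE z0).
Qed.

Section GradientIteration.
Variables (F : fieldType) (n1 n2 : nat) (C : 'M[F]_(n2, n1)).

Lemma eigenvalue_affine n (M : 'M[F]_n) (c g z : F) : g != 0 ->
  eigenvalue (c%:M + g *: M) z -> eigenvalue M ((z - c) / g).
Proof.
move=> g_neq0 /eigenvalueP[u Eu u_neq0]; apply/eigenvalueP; exists u => //.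
apply: (scalerI g_neq0); apply: (addrI (c *: u)).
rewrite scalemxAr -[c *: u in LHS]mul_mx_scalar -mulmxDr Eu scalerA mulrC divfK //.
by rewrite -scalerDl; congr (_ *: _); ring.
Qed.

Definition gd_mx (a b : F) : 'M[F]_(n1 + n2) :=
  block_mx ((1 - a)%:M) (- a *: C^T)
           (- (b * (1 - a)) *: C) ((1 - b)%:M + (a * b) *: (C *m C^T)).

Lemma eigenvalue_gd_mx_CCt (a b l z : F) :
  eigenvalue (C *m C^T) l -> gd_quad a b l z = 0 -> z != 1 - a ->
  eigenvalue (gd_mx a b) z.
Proof.
move=> /eigenvalueP[w wK w_neq0] quad_z z_neq; apply/eigenvalueP.
exists (row_mx ((b * (1 - a)) *: (w *m C)) ((1 - a - z) *: w)); last first.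
  rewrite row_mx_eq0 negb_and !scaler_eq0 negb_or (negbTE w_neq0) orbF.
  by rewrite subr_eq0 [_ == z]eq_sym z_neq orbT.
rewrite mul_row_block scale_row_mx; congr row_mx.
  rewrite mul_mx_scalar -!scalemxAr -!scalemxAl !scalerA -scalerDl; congr (_ *: _).
  ring.
rewrite mulmxDr mul_mx_scalar -!scalemxAr -!scalemxAl -!mulmxA wK !scalerA -!scalerDl.
congr (_ *: _); apply: subr0_eq; rewrite -quad_z /gd_quad; ring.
Qed.

Lemma eigenvalue_gd_mx_CtC (a b l z : F) :
  eigenvalue (C^T *m C) l -> gd_quad a b l z = 0 ->
  z != 1 - b + a * b * l \/ (l != 0 /\ z != 1 - a) ->
  eigenvalue (gd_mx a b) z.
Proof.
move=> /eigenvalueP[u uL u_neq0] quad_z z_neq; apply/eigenvalueP.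
(* Two candidate eigenvectors: the first vanishes when z = 1 - b + a b l, the
   second when u C^T = 0, which l != 0 rules out. *)
have uCtC : u *m C^T *m C = l *: u by rewrite -mulmxA.
have uCCt : u *m C^T *m (C *m C^T) = l *: (u *m C^T) by rewrite mulmxA uCtC scalemxAl.
case: z_neq => [z_neq|[l_neq0 z_neq]].
  exists (row_mx ((1 - b + a * b * l - z) *: u) (a *: (u *m C^T))); last first.
    by rewrite row_mx_eq0 negb_and scaler_eq0 negb_or u_neq0 subr_eq0 [_ == z]eq_sym z_neq.
  rewrite mul_row_block scale_row_mx; congr row_mx.
    rewrite mul_mx_scalar -!scalemxAr -!scalemxAl uCtC !scalerA -scalerDl.
    congr (_ *: _); apply: subr0_eq; rewrite -quad_z /gd_quad; ring.
  rewrite mulmxDr mul_mx_scalar -!scalemxAr -!scalemxAl uCCt !scalerA -!scalerDl.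
  congr (_ *: _); ring.
have uCt_neq0 : u *m C^T != 0.
  apply: contraNneq u_neq0 => uCt0; move: uCtC; rewrite uCt0 mul0mx => /esym/eqP.
  by rewrite scaler_eq0 (negbTE l_neq0).
exists (row_mx (((1 - a) * b * l) *: u) ((1 - a - z) *: (u *m C^T))); last first.
  rewrite row_mx_eq0 negb_and !scaler_eq0 !negb_or (negbTE uCt_neq0) andbT.
  by rewrite subr_eq0 [_ == z]eq_sym z_neq orbT.
rewrite mul_row_block scale_row_mx; congr row_mx.
  rewrite mul_mx_scalar -!scalemxAr -!scalemxAl uCtC !scalerA -scalerDl.
  congr (_ *: _); ring.
rewrite mulmxDr mul_mx_scalar -!scalemxAr -!scalemxAl uCCt !scalerA -!scalerDl.
congr (_ *: _); apply: subr0_eq; rewrite -quad_z /gd_quad; ring.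
Qed.

Lemma eigenvalue_CCt_gd_mx1 (g z : F) : g != 0 -> z != 0 ->
  eigenvalue (gd_mx 1 g) z -> eigenvalue (C *m C^T) ((z - (1 - g)) / g).
Proof.
move=> g_neq0 z_neq0 /eigenvalueP[v]; rewrite -(hsubmxK v).
move: (lsubmx v) (rsubmx v) => x y.
rewrite mul_row_block scale_row_mx /gd_mx !subrr mulr0 oppr0 !scale0r mulmx0 addr0.
rewrite mul_mx_scalar scale0r mul1r => /eq_row_mx[/esym/eqP + Ey].
rewrite scaler_eq0 (negbTE z_neq0) /= => /eqP x0.
move: Ey; rewrite x0 mul0mx add0r row_mx_eq0 eqxx /= => Ey y_neq0.
by apply: eigenvalue_affine g_neq0 _; apply/eigenvalueP; exists y.
Qed.

Lemma eigenvalue_CtC_gd_mx1 (g z : F) : g != 0 -> z != 0 ->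
  eigenvalue (gd_mx g 1) z -> eigenvalue (C^T *m C) ((z - (1 - g)) / g).
Proof.
move=> g_neq0 z_neq0 /eigenvalueP[v]; rewrite -(hsubmxK v).
move: (lsubmx v) (rsubmx v) => x y.
rewrite mul_row_block scale_row_mx /gd_mx subrr mul1r mulr1 => /eq_row_mx[Ex Ey] v_neq0.
set u := x - y *m C.
have Eux : (1 - g) *: u = z *: x.
  by rewrite -Ex /u scalerBr mul_mx_scalar -scalemxAr scaleNr.
have Euy : - g *: (u *m C^T) = z *: y.
  rewrite -Ey /u mulmxBl -mulmxA scalerBr (_ : 0%:M = 0) ?raddf0 // add0r.
  by rewrite -!scalemxAr !scaleNr opprK.
have u_neq0 : u != 0.
  apply: contraNneq v_neq0 => u0; move: Eux Euy; rewrite u0 scaler0 mul0mx scaler0.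
  move=> /esym/eqP + /esym/eqP; rewrite !scaler_eq0 (negbTE z_neq0) /= => /eqP-> /eqP->.
  by rewrite row_mx0.
apply: eigenvalue_affine g_neq0 _; apply/eigenvalueP; exists u => //.
have -> : z *: u = z *: x - (z *: y) *m C by rewrite /u scalerBr scalemxAl.
by rewrite -Eux -Euy mulmxDr mul_mx_scalar -scalemxAl scaleNr opprK -scalemxAr mulmxA.
Qed.

End GradientIteration.

Lemma gd_quad_split (F : closedFieldType) (a b l : F) : exists z1 z2,
  [/\ gd_quad a b l z1 = 0, gd_quad a b l z2 = 0 & z1 * z2 = (1 - a) * (1 - b)].
Proof.
set T := 2 - a - b + a * b * l; set D := (1 - a) * (1 - b).
have [z1] := @solve_monicpoly F 2 (fun i => if i == 0%N then - D else T) isT.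
rewrite !big_ord_recl big_ord0 /= expr0 expr1 mulr1 addr0 => z1_sq.
have z1_root : z1 ^+ 2 - T * z1 + D = 0 by rewrite z1_sq; ring.
exists z1, (T - z1); rewrite !gd_quadE -/T -/D; split => //.
  by rewrite -z1_root; ring.
by rewrite -[D]subr0 -z1_root; ring.
Qed.

Section QuadraticRoots.
Variable R : rcfType.

Lemma quadratic_root_ge (T D x : R) : x ^+ 2 - T * x + D <= 0 ->
  exists2 r, r ^+ 2 - T * r + D = 0 & x <= r.
Proof.
move=> qx; set s := Num.sqrt (T ^+ 2 - 4 * D).
have disc : (2 * x - T) ^+ 2 <= T ^+ 2 - 4 * D by nra.
have s_sq : s ^+ 2 = T ^+ 2 - 4 * D by rewrite sqr_sqrtr // (le_trans (sqr_ge0 _) disc).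
exists ((T + s) / 2).
  have -> : ((T + s) / 2) ^+ 2 - T * ((T + s) / 2) + D = (s ^+ 2 - (T ^+ 2 - 4 * D)) / 4.
    by field.
  by rewrite s_sq subrr mul0r.
have : `|2 * x - T| <= s by rewrite -sqrtr_sqr ler_wsqrtr.
rewrite ler_norml; lra.
Qed.

Lemma quadratic_root_le (T D x : R) : x ^+ 2 - T * x + D <= 0 ->
  exists2 r, r ^+ 2 - T * r + D = 0 & r <= x.
Proof.
move=> qx; have [r qr xr] : exists2 r, r ^+ 2 - (- T) * r + D = 0 & - x <= r.
  by apply: quadratic_root_ge; rewrite sqrrN mulrNN.
by exists (- r); [rewrite sqrrN mulrN -mulNr | rewrite lerNl].
Qed.

Lemma gd_quad_root_ge (a b l x : R) : gd_quad a b l x <= 0 ->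
  exists2 r, gd_quad a b l r = 0 & x <= r.
Proof. by rewrite gd_quadE => /quadratic_root_ge[r]; rewrite -gd_quadE; exists r. Qed.

Lemma gd_quad_root_le (a b l x : R) : gd_quad a b l x <= 0 ->
  exists2 r, gd_quad a b l r = 0 & r <= x.
Proof. by rewrite gd_quadE => /quadratic_root_le[r]; rewrite -gd_quadE; exists r. Qed.

Lemma gd_quad_spread_dichotomy (a b l1 l2 : R) :
  0 <= l1 -> l1 <= l2 -> l2 < 1 -> 0 < a * b -> (1 - a) * (1 - b) <= 0 ->
  let h := (l2 - l1) / (2 - l2 - l1) in 0 < h ->
  gd_quad a b l2 h <= 0 \/ gd_quad a b l1 (- h) <= 0.
Proof.
move=> l1_ge0 l12 l2_lt1 c_gt0 D_le0 h h_gt0.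
have hE : h * (2 - l2 - l1) = l2 - l1 by rewrite /h divfK // gt_eqF //; lra.
rewrite !gd_quadE sqrrN mulrN opprK.
have -> : 2 - a - b + a * b * l2 = 1 - a * b * (1 - l2) + (1 - a) * (1 - b) by ring.
have -> : 2 - a - b + a * b * l1 = 1 - a * b * (1 - l1) + (1 - a) * (1 - b) by ring.
move: (a * b) ((1 - a) * (1 - b)) c_gt0 D_le0 => c D c_gt0 D_le0.
case: (lerP (h ^+ 2 - (1 - c * (1 - l2) + D) * h + D) 0) => [|q2]; first by left.
case: (lerP (h ^+ 2 + (1 - c * (1 - l1) + D) * h + D) 0) => [|q1]; first by right.
(* Summing both failures gives c (2 - l2 - l1) < 2, hence h < 1 - c (1 - l2)
   and h < 1, so the first quadratic, h (h - 1 + c (1 - l2)) + D (1 - h), is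
   negative after all. *)
exfalso.
have u_gt0 : 0 < 2 - l2 - l1 by lra.
have c_lt : c * (2 - l2 - l1) < 2.
  have : c * (l2 - l1) * h < 2 * h ^+ 2 by nra.
  by rewrite -hE => lt; rewrite -(ltr_pM2l h_gt0); nra.
have h_lt : h < 1 - c * (1 - l2) by rewrite -(ltr_pM2r u_gt0) hE; nra.
have h_lt1 : h < 1 by rewrite -(ltr_pM2r u_gt0) hE; lra.
nra.
Qed.

Lemma spread_le_of_gd_quad_roots (a b l1 l2 rho : R) :
  0 <= l1 -> l1 <= l2 -> l2 < 1 -> 0 < a * b -> (1 - a) * (1 - b) <= 0 -> 0 <= rho ->
  (0 < l2 -> forall r, gd_quad a b l2 r = 0 -> 0 < r -> r <= rho) ->
  (forall r, gd_quad a b l1 r = 0 -> r < 0 -> - r <= rho) ->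
  (l2 - l1) / (2 - l2 - l1) <= rho.
Proof.
move=> l1_ge0 l12 l2_lt1 c_gt0 D_le0 rho_ge0 pos_root neg_root.
set h := (l2 - l1) / (2 - l2 - l1).
have u_gt0 : 0 < 2 - l2 - l1 by lra.
have [h_le0|h_gt0] := lerP h 0; first exact: le_trans h_le0 rho_ge0.
have l2_gt0 : 0 < l2.
  by move: h_gt0; rewrite /h pmulr_lgt0 ?invr_gt0 //; lra.
have [/gd_quad_root_ge[r qr hr]|/gd_quad_root_le[r qr rh]] :=
  gd_quad_spread_dichotomy l1_ge0 l12 l2_lt1 c_gt0 D_le0 h_gt0.
  exact: le_trans hr (pos_root l2_gt0 r qr (lt_le_trans h_gt0 hr)).
have r_lt0 : r < 0 by rewrite (le_lt_trans rh) ?oppr_lt0.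
by rewrite lerNr in rh; exact: le_trans rh (neg_root r qr r_lt0).
Qed.

Lemma gd_quad_S00_product (a b mu : R) :
  0 < a <= 1 -> 0 < b <= 1 -> 0 < mu < 1 -> 0 < gd_quad a b mu mu ->
  mu ^+ 2 <= (1 - a) * (1 - b).
Proof.
move=> /andP[a_gt0 a_le1] /andP[b_gt0 b_le1] /andP[mu_gt0 mu_lt1].
have -> : gd_quad a b mu mu =
    (1 - mu) * ((1 - a) * (1 - b) - mu * ((1 - a) + (1 - b) - (1 - a) * (1 - b))).
  by rewrite /gd_quad; ring.
rewrite pmulr_rgt0 ?subr_gt0 //.
have [p_ge0 p_lt1 q_ge0 q_lt1] : [/\ 0 <= 1 - a, 1 - a < 1, 0 <= 1 - b & 1 - b < 1].
  by split; lra.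
move: (1 - a) (1 - b) p_ge0 p_lt1 q_ge0 q_lt1 => p q p_ge0 p_lt1 q_ge0 q_lt1 pos.
rewrite leNgt; apply/negP => pq_lt.
case: (lerP p q) => pq.
  have p_lt : p < mu by nra.
  have : 0 <= mu * p * (1 - q) + q * (mu - p) by rewrite addr_ge0 ?mulr_ge0 //; lra.
  lra.
have q_lt : q < mu by nra.
have : 0 <= mu * q * (1 - p) + p * (mu - q) by rewrite addr_ge0 ?mulr_ge0 //; lra.
lra.
Qed.

Lemma line_spread_bound (l1 l2 mu g : R) :
  0 <= l1 -> l1 <= mu <= l2 -> l2 < 1 -> g = 2 / (2 - l2 - l1) ->
  `|1 - g + g * mu| <= (l2 - l1) / (2 - l2 - l1).
Proof.
move=> l1_ge0 /andP[l1_mu mu_l2] l2_lt1 ->; have u_gt0 : 0 < 2 - l2 - l1 by lra.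
have -> : 1 - 2 / (2 - l2 - l1) + 2 / (2 - l2 - l1) * mu =
          (2 * mu - l1 - l2) / (2 - l2 - l1) by field; lra.
rewrite normrM [`|_^-1|]gtr0_norm ?invr_gt0 // ler_pM2r ?invr_gt0 // ler_norml.
by apply/andP; split; lra.
Qed.

End QuadraticRoots.

Lemma mxrank_row_mxC (F : fieldType) m n1 n2 (A : 'M[F]_(m, n1)) (B : 'M_(m, n2)) :
  \rank (row_mx A B) = \rank (row_mx B A).
Proof. by rewrite -mxrank_tr tr_row_mx -addsmxE addsmxC addsmxE -tr_row_mx mxrank_tr. Qed.

Section CrossGram.
Variable C : numClosedFieldType.
Local Open Scope sesquilinear_scope.
Local Notation "''[' u , v ]" := (dotmx u v) : ring_scope.
Local Notation "''[' u ]" := (dotmx u u) : ring_scope.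

Lemma dotmx_mulmxl m n (A : 'M[C]_(m, n)) (u : 'rV_m) (v : 'rV_n) :
  '[u *m A, v] = '[u, v *m A^t*].
Proof. by rewrite !dotmxE trmx_mul map_mxM trmxCK mulmxA. Qed.

Lemma dotmx_scalel n (a : C) (u v : 'rV[C]_n) : '[a *: u, v] = a * '[u, v].
Proof. by rewrite !dotmxE -scalemxAl mxE. Qed.

Lemma cross_gram_eigenvalue_ge0_lt1 m k1 k2
    (B1 : 'M[C]_(m, k1)) (B2 : 'M[C]_(m, k2)) (mu : C) :
  \rank (row_mx B1 B2) = (k1 + k2)%N -> B1^t* *m B1 = 1%:M -> B2^t* *m B2 = 1%:M ->
  eigenvalue ((B2^t* *m B1) *m (B2^t* *m B1)^t*) mu -> 0 <= mu < 1.
Proof.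
(* For an eigenvector w, with c = w B2^t* B1 and v = w B2^t*: mu |w|^2 = |c|^2 and
   |v - c B1^t*|^2 = |w|^2 - |c|^2, where v = c B1^t* contradicts the rank. *)
move=> B_full B1_iso B2_iso /eigenvalueP[w Ew w_neq0].
set c := w *m (B2^t* *m B1); set v := w *m B2^t*.
have w_gt0 : 0 < '[w] by rewrite dnorm_gt0.
have Ec : '[c] = mu * '[w].
  by rewrite -dotmx_scalel -Ew mulmxA [RHS]dotmx_mulmxl trmxCK.
have Ev : '[v] = '[w] by rewrite /v dotmx_mulmxl trmxCK -mulmxA B2_iso mulmx1.
have Ecv : '[v, c *m B1^t*] = '[c] by rewrite -dotmx_mulmxl /v -mulmxA.
have Exv : '[c *m B1^t*, v] = '[c] by rewrite dotmx_mulmxl trmxCK /v -mulmxA.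
have Ec1 : '[c *m B1^t*] = '[c] by rewrite dotmx_mulmxl trmxCK -mulmxA B1_iso mulmx1.
have Ediff : '[v - c *m B1^t*] = '[w] - '[c].
  rewrite linearBl !linearBr /= Ev Ec1 Ecv Exv; ring.
have c_lt_w : '[c] < '[w].
  rewrite lt_def -subr_ge0 -Ediff dnorm_ge0 andbT.
  apply: contraNneq w_neq0 => Ecw; move: Ediff; rewrite Ecw subrr => /eqP.
  rewrite dnorm_eq0 subr_eq0 => /eqP v_eq.
  have B_free : row_free (col_mx (B1^t*) (B2^t*)).
    by rewrite /row_free -map_col_mx -tr_row_mx mxrank_map mxrank_tr B_full.
  have : row_mx (- c) w *m col_mx (B1^t*) (B2^t*) = 0 *m col_mx (B1^t*) (B2^t*).
    by rewrite mul0mx mul_row_col mulNmx -/v v_eq addNr.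
  by move/(row_free_inj B_free)/eqP; rewrite row_mx_eq0 => /andP[].
have -> : mu = '[c] / '[w] by rewrite Ec mulfK // gt_eqF.
by rewrite divr_ge0 ?dnorm_ge0 //= ltr_pdivrMr // mul1r.
Qed.

End CrossGram.

Section ComplexReal.
Variable R : rcfType.

Lemma normc_ge0 (z : R[i]) : 0 <= normc z.
Proof. by case: z => x y; exact: sqrtr_ge0. Qed.

Lemma normc_real (x : R) : normc (x%:C)%C = `|x|.
Proof. by rewrite /normc /= expr0n /= addr0 sqrtr_sqr. Qed.

Lemma complex_ge0_lt1 (mu : R[i]) : 0 <= mu < 1 -> exists2 x : R, mu = (x%:C)%C & 0 <= x < 1.
Proof.
case: mu => x y; rewrite lecE ltcE /= => /andP[/andP[/eqP y0 x_ge0] /andP[_ x_lt1]].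
by exists x; rewrite ?y0 ?x_ge0.
Qed.

Lemma spectrum_extremes n (M : 'M[R[i]]_n) : (0 < n)%N ->
  (forall mu, eigenvalue M mu -> 0 <= mu < 1) ->
  exists l1 l2 : R, [/\ eigenvalue M (l1%:C)%C, eigenvalue M (l2%:C)%C,
    0 <= l1 <= l2, l2 < 1 &
    forall mu, eigenvalue M mu -> exists2 x : R, mu = (x%:C)%C & l1 <= x <= l2].
Proof.
move=> n_gt0 spec01.
case: (closed_field_poly_normal (char_poly M)) => r.
rewrite (monicP (char_poly_monic M)) scale1r => charM.
have eigE z : eigenvalue M z = (z \in r) by rewrite eigenvalue_root_char charM root_prod_XsubC.
have size_r : (0 < size r)%N.
  by move: (size_char_poly M); rewrite charM size_prod_XsubC => -[->].
pose F (i : 'I_(size r)) := complex.Re r`_i.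
have realF (i : 'I_(size r)) : r`_i = (F i)%:C%C /\ 0 <= F i < 1.
  have /complex_ge0_lt1[x ri x01] : 0 <= r`_i < 1 by rewrite spec01 ?eigE ?mem_nth.
  by rewrite /F ri.
pose i0 := Ordinal size_r.
have [i1 _ min_i1] := @arg_minP _ _ _ i0 xpredT F isT.
have [i2 _ max_i2] := @arg_maxP _ _ _ i0 xpredT F isT.
have [ri1 /andP[Fi1_ge0 _]] := realF i1; have [ri2 /andP[_ Fi2_lt1]] := realF i2.
exists (F i1), (F i2); split; rewrite -?ri1 -?ri2 ?eigE ?mem_nth ?Fi1_ge0 ?min_i1 //.
move=> mu; rewrite eigE => mu_r.
have j_lt : (index mu r < size r)%N by rewrite index_mem.
have [rj _] := realF (Ordinal j_lt).
exists (F (Ordinal j_lt)); first by rewrite -rj nth_index.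
by rewrite min_i1 //=; exact: max_i2.
Qed.

End ComplexReal.

Section RealCrossGram.
Variable R : rcfType.
Local Open Scope sesquilinear_scope.
Local Notation cpx M := (map_mx (fun x : R => (x%:C)%C) M).

Lemma map_trmxC m n (A : 'M[R]_(m, n)) : (cpx A)^t* = cpx A^T.
Proof. by rewrite map_trmx -map_mx_comp; apply: eq_map_mx => x; exact: conjc_real. Qed.

Lemma real_cross_gram_eigenvalue_ge0_lt1 m k1 k2
    (B1 : 'M[R]_(m, k1)) (B2 : 'M[R]_(m, k2)) (mu : R[i]) :
  \rank (row_mx B1 B2) = (k1 + k2)%N -> B1^T *m B1 = 1%:M -> B2^T *m B2 = 1%:M ->
  eigenvalue (cpx (B2^T *m B1) *m (cpx (B2^T *m B1))^T) mu -> 0 <= mu < 1.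
Proof.
have cpx_iso k (B : 'M[R]_(m, k)) : B^T *m B = 1%:M -> (cpx B)^t* *m cpx B = 1%:M.
  by move=> B_iso; rewrite map_trmxC -map_mxM B_iso map_mx1.
move=> B_full /cpx_iso B1_iso /cpx_iso B2_iso e.
apply: (cross_gram_eigenvalue_ge0_lt1 _ B1_iso B2_iso); first by rewrite -map_row_mx mxrank_map.
by rewrite map_trmxC -map_mxM map_trmxC -map_trmx.
Qed.

Lemma real_cross_gram_spectra m k1 k2 (B1 : 'M[R]_(m, k1)) (B2 : 'M[R]_(m, k2)) :
  \rank (row_mx B1 B2) = (k1 + k2)%N -> B1^T *m B1 = 1%:M -> B2^T *m B2 = 1%:M ->
  let C := cpx (B2^T *m B1) in
  (forall mu, eigenvalue (C *m C^T) mu -> 0 <= mu < 1) /\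
  (forall mu, eigenvalue (C^T *m C) mu -> 0 <= mu < 1).
Proof.
move=> B_full B1_iso B2_iso C; split => mu; first exact: real_cross_gram_eigenvalue_ge0_lt1.
have CtE : C^T = cpx (B1^T *m B2) by rewrite map_trmx trmx_mul trmxK.
rewrite CtE -[C]trmxK CtE.
by apply: real_cross_gram_eigenvalue_ge0_lt1; rewrite // mxrank_row_mxC [RHS]addnC.
Qed.

End RealCrossGram.

Lemma mx_neq0_dims (V : nmodType) m n (A : 'M[V]_(m, n)) : A != 0 -> (0 < m)%N /\ (0 < n)%N.
Proof.
case: m A => [|m] A; first by rewrite [A]flatmx0 eqxx.
by case: n A => [|n] A; first by rewrite [A]thinmx0 eqxx.
Qed.

Lemma is_min_on_through (T U : Type) (R : realType) (P : T -> Prop) (Q : U -> Prop)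
    (f : T -> R) (e : U -> T) (u0 : U) (h : R) :
  Q u0 -> (forall u, Q u -> P (e u)) -> f (e u0) <= h -> (forall x, P x -> h <= f x) ->
  exists v, is_min_on P f v /\ is_min_on Q (fun u => f (e u)) v.
Proof.
move=> Q_u0 QP fu0_le h_le; exists (f (e u0)); split; split.
- by exists (e u0); split => //; apply: QP.
- by move=> x Px; apply: le_trans fu0_le (h_le x Px).
- by exists u0.
- by move=> u Qu; apply: le_trans fu0_le (h_le _ (QP u Qu)).
Qed.

Section SpectralRadius.
Variable R : realType.
Local Notation cpx M := (map_mx (fun x : R => (x%:C)%C) M).

Lemma spectral_radius_ge0 n (M : 'M[R]_n) : 0 <= spectral_radius M.
Proof.
by rewrite /spectral_radius; case: (closed_field_poly_normal _) => r /= _; exact: bigmax_ge_id.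
Qed.

Lemma normc_le_spectral_radius n (M : 'M[R]_n) (z : R[i]) :
  eigenvalue (cpx M) z -> normc z <= spectral_radius M.
Proof.
rewrite eigenvalue_root_char /spectral_radius; case: (closed_field_poly_normal _) => r /=.
rewrite (monicP (char_poly_monic _)) scale1r => ->.
rewrite root_prod_XsubC => zr.
exact: le_bigmax_seq.
Qed.

Lemma spectral_radius_le n (M : 'M[R]_n) (B : R) : 0 <= B ->
  (forall z, eigenvalue (cpx M) z -> z != 0 -> normc z <= B) -> spectral_radius M <= B.
Proof.
move=> B_ge0 bound; rewrite /spectral_radius; case: (closed_field_poly_normal _) => r /=.
rewrite (monicP (char_poly_monic _)) scale1r => charM.
rewrite big_seq_cond; apply: bigmax_le => // z /andP[zr _].
have [->|z_neq0] := eqVneq z 0; first by rewrite normc0.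
by apply: bound z_neq0; rewrite eigenvalue_root_char charM root_prod_XsubC.
Qed.

Lemma spectral_radius_line_le n (M : 'M[R]_n) (l1 l2 g : R) :
  0 <= l1 -> l1 <= l2 -> l2 < 1 -> g = 2 / (2 - l2 - l1) ->
  (forall z, eigenvalue (cpx M) z -> z != 0 ->
     exists2 x : R, (z - (1 - (g%:C)%C)) / (g%:C)%C = (x%:C)%C & l1 <= x <= l2) ->
  spectral_radius M <= (l2 - l1) / (2 - l2 - l1).
Proof.
move=> l1_ge0 l12 l2_lt1 gE spec.
have u_gt0 : 0 < 2 - l2 - l1 by lra.
have g_neq0 : (g%:C)%C != 0 by rewrite fmorph_eq0 gE mulf_neq0 ?invr_eq0 ?gt_eqF.
apply: spectral_radius_le; first by rewrite divr_ge0 //; lra.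
move=> z ez z_neq0; have [x zE x_in] := spec z ez z_neq0.
have -> : z = 1 - (g%:C)%C + (g%:C)%C * (x%:C)%C by rewrite -zE mulrC divfK // addrC subrK.
have -> : 1 - (g%:C)%C + (g%:C)%C * (x%:C)%C = ((1 - g + g * x)%:C)%C.
  by rewrite rmorphD rmorphB rmorph1 rmorphM.
by rewrite normc_real (line_spread_bound l1_ge0 x_in l2_lt1 gE).
Qed.

End SpectralRadius.

Section GdIterMx.
Variables (R : realType) (n1 n2 : nat) (Cm : 'M[R]_(n2, n1)).
Local Notation cpx M := (map_mx (fun x : R => (x%:C)%C) M).
Local Notation Cc := (cpx Cm).
Local Notation rho a b := (spectral_radius (gd_iter_mx Cm a b)).

Lemma map_gd_iter_mx (a b : R) :
  cpx (gd_iter_mx Cm a b) = gd_mx Cc (a%:C)%C (b%:C)%C.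
Proof.
rewrite /gd_iter_mx /gd_mx map_block_mx !(map_mxD, map_mxZ, map_mxM, map_trmx, map_scalar_mx).
by rewrite !(rmorphB, rmorphN, rmorphM, rmorph1).
Qed.

Lemma gd_quad_real (a b l r : R) :
  gd_quad (a%:C)%C (b%:C)%C (l%:C)%C (r%:C)%C = ((gd_quad a b l r)%:C)%C.
Proof. by rewrite rmorph_gd_quad. Qed.

Lemma normc_CCt_root_le (a b l : R) (z : R[i]) :
  eigenvalue (Cc *m Cc^T) (l%:C)%C -> gd_quad (a%:C)%C (b%:C)%C (l%:C)%C z = 0 ->
  z != ((1 - a)%:C)%C -> normc z <= rho a b.
Proof.
move=> el qz z_neq; apply: normc_le_spectral_radius; rewrite map_gd_iter_mx.
by apply: eigenvalue_gd_mx_CCt el qz _; rewrite rmorphB rmorph1 in z_neq.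
Qed.

Lemma normc_CtC_root_le (a b l : R) (z : R[i]) :
  eigenvalue (Cc^T *m Cc) (l%:C)%C -> gd_quad (a%:C)%C (b%:C)%C (l%:C)%C z = 0 ->
  z != ((1 - b + a * b * l)%:C)%C \/ (l != 0 /\ z != ((1 - a)%:C)%C) ->
  normc z <= rho a b.
Proof.
move=> el qz z_neq; apply: normc_le_spectral_radius; rewrite map_gd_iter_mx.
apply: eigenvalue_gd_mx_CtC el qz _; case: z_neq => [z_neq|[l_neq0 z_neq]].
  by left; rewrite !(rmorphD, rmorphN, rmorphM, rmorph1) in z_neq.
by right; split; [rewrite fmorph_eq0 | rewrite rmorphB rmorph1 in z_neq].
Qed.

Lemma spread_CCt_le_spectral_radius (l1 l2 a b : R) :
  eigenvalue (Cc *m Cc^T) (l1%:C)%C -> eigenvalue (Cc *m Cc^T) (l2%:C)%C ->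
  0 <= l1 -> l1 <= l2 -> l2 < 1 -> 0 < a <= 1 -> 1 <= b ->
  (l2 - l1) / (2 - l2 - l1) <= rho a b.
Proof.
move=> e1 e2 l1_ge0 l12 l2_lt1 /andP[a_gt0 a_le1] b_ge1.
apply: (spread_le_of_gd_quad_roots (a := a) (b := b) l1_ge0 l12 l2_lt1 _ _
  (spectral_radius_ge0 _)).
- by rewrite mulr_gt0 //; lra.
- by rewrite mulr_ge0_le0 //; lra.
- move=> l2_gt0 r qr r_gt0; rewrite -[r]gtr0_norm // -normc_real.
  apply: normc_CCt_root_le e2 _ _; first by rewrite gd_quad_real qr.
  by rewrite (inj_eq (@complexI _)); apply: gd_quad_root_neq qr; rewrite gt_eqF //; lra.
move=> r qr r_lt0; rewrite -ltr0_norm // -normc_real.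
apply: normc_CCt_root_le e1 _ _; first by rewrite gd_quad_real qr.
by rewrite (inj_eq (@complexI _)) lt_eqF //; lra.
Qed.

Lemma spread_CtC_le_spectral_radius (l1 l2 a b : R) :
  eigenvalue (Cc^T *m Cc) (l1%:C)%C -> eigenvalue (Cc^T *m Cc) (l2%:C)%C ->
  0 <= l1 -> l1 <= l2 -> l2 < 1 -> 1 <= a -> 0 < b <= 1 ->
  (l2 - l1) / (2 - l2 - l1) <= rho a b.
Proof.
move=> e1 e2 l1_ge0 l12 l2_lt1 a_ge1 /andP[b_gt0 b_le1].
apply: (spread_le_of_gd_quad_roots (a := a) (b := b) l1_ge0 l12 l2_lt1 _ _
  (spectral_radius_ge0 _)).
- by rewrite mulr_gt0 //; lra.
- by rewrite mulr_le0_ge0 //; lra.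
- move=> l2_gt0 r qr r_gt0; rewrite -[r]gtr0_norm // -normc_real.
  apply: normc_CtC_root_le e2 _ _; first by rewrite gd_quad_real qr.
  right; split; first by rewrite gt_eqF.
  by rewrite (inj_eq (@complexI _)); apply: gd_quad_root_neq qr; rewrite gt_eqF //; lra.
move=> r qr r_lt0; rewrite -ltr0_norm // -normc_real.
apply: normc_CtC_root_le e1 _ _; first by rewrite gd_quad_real qr.
have abl_ge0 : 0 <= a * b * l1 by rewrite !mulr_ge0 //; lra.
by left; rewrite (inj_eq (@complexI _)) lt_eqF //; lra.
Qed.

Lemma CCt_eigenvalue_le_spectral_radius (a b mu : R) :
  eigenvalue (Cc *m Cc^T) (mu%:C)%C -> 0 < mu < 1 -> 0 < a <= 1 -> 0 < b <= 1 ->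
  mu <= rho a b.
Proof.
move=> e mu01 a01 b01; have /andP[mu_gt0 _] := mu01.
have /andP[a_gt0 _] := a01; have /andP[b_gt0 _] := b01.
have lift z : gd_quad (a%:C)%C (b%:C)%C (mu%:C)%C z = 0 -> mu <= normc z -> mu <= rho a b.
  move=> qz mu_z; apply: (le_trans mu_z (normc_CCt_root_le e qz _)).
  have z_neq0 : z != 0 by apply: contraTneq mu_z => ->; rewrite normc0 -ltNge.
  by rewrite rmorphB rmorph1; apply: gd_quad_root_neq qz; rewrite // fmorph_eq0 gt_eqF.
have [quad_le|quad_gt] := lerP (gd_quad a b mu mu) 0.
  have [r qr mu_r] := gd_quad_root_ge quad_le.
  apply: (lift (r%:C)%C); first by rewrite gd_quad_real qr.
  by rewrite normc_real (le_trans mu_r (ler_norm r)).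
have D_ge := gd_quad_S00_product a01 b01 mu01 quad_gt.
have [z1 [z2 [q1 q2 z12]]] := gd_quad_split (a%:C)%C (b%:C)%C (mu%:C)%C.
have [mu_z1|z1_lt] := lerP mu (normc z1); first exact: lift q1 mu_z1.
apply: lift q2 _; rewrite leNgt; apply/negP => z2_lt.
have D_real : (1 - (a%:C)%C) * (1 - (b%:C)%C) = (((1 - a) * (1 - b))%:C)%C.
  by rewrite rmorphM !rmorphB rmorph1.
have : normc z1 * normc z2 < mu ^+ 2 by rewrite expr2 ltr_pM ?normc_ge0.
by rewrite -normcM z12 D_real normc_real ger0_norm ?ltNge ?D_ge // (le_trans (sqr_ge0 _) D_ge).
Qed.

End GdIterMx.

Section Regions.
Variables (R : realType) (n1 n2 : nat) (Cm : 'M[R]_(n2, n1)).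
Local Notation cpx M := (map_mx (fun x : R => (x%:C)%C) M).
Local Notation Cc := (cpx Cm).
Local Notation rho a b := (spectral_radius (gd_iter_mx Cm a b)).
Hypothesis CCt_spectrum : forall mu, eigenvalue (Cc *m Cc^T) mu -> 0 <= mu < 1.
Hypothesis CtC_spectrum : forall mu, eigenvalue (Cc^T *m Cc) mu -> 0 <= mu < 1.

Lemma gd_min_S00 : is_min_on (fun g : R * R => 0 < g.1 <= 1 /\ 0 < g.2 <= 1)
  (fun g => rho g.1 g.2) (rho 1 1).
Proof.
split; first by exists (1, 1); rewrite /= ltr01 lexx.
move=> [a b] [a01 b01].
apply: spectral_radius_le (spectral_radius_ge0 _) _ => z ez z_neq0.
move: ez; rewrite map_gd_iter_mx rmorph1 => /(eigenvalue_CCt_gd_mx1 (oner_neq0 _) z_neq0).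
rewrite subrr subr0 divr1 => ez.
have [mu zE /andP[mu_ge0 mu_lt1]] := complex_ge0_lt1 (CCt_spectrum ez).
have mu_gt0 : 0 < mu.
  by rewrite lt_def mu_ge0 andbT; apply: contraNneq z_neq0 => mu0; rewrite zE mu0.
rewrite zE normc_real ger0_norm //.
by apply: CCt_eigenvalue_le_spectral_radius; rewrite -?zE ?mu_gt0.
Qed.

(* The step g = 2 / (2 - l2 - l1) balances the extremes:
   1 - g + g l1 = - (1 - g + g l2). *)
Lemma gd_min_S01 : (0 < n2)%N -> exists v,
  is_min_on (fun g : R * R => 0 < g.1 <= 1 /\ 1 <= g.2) (fun g => rho g.1 g.2) v /\
  is_min_on (fun g2 : R => 1 <= g2) (fun g2 => rho 1 g2) v.
Proof.
move=> n2_gt0.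
have [l1 [l2 [e1 e2 /andP[l1_ge0 l12] l2_lt1 spec]]] := spectrum_extremes n2_gt0 CCt_spectrum.
set g := 2 / (2 - l2 - l1).
have g_ge1 : 1 <= g by rewrite /g ler_pdivlMr ?mul1r; lra.
have g_neq0 : (g%:C)%C != 0 by rewrite fmorph_eq0 gt_eqF //; lra.
apply: (is_min_on_through (e := fun b => (1, b)) (u0 := g) (h := (l2 - l1) / (2 - l2 - l1))).
- exact: g_ge1.
- by move=> b b_ge1; rewrite /= ltr01 lexx.
- apply: (spectral_radius_line_le l1_ge0 l12 l2_lt1 erefl) => z ez z_neq0.
  move: ez; rewrite map_gd_iter_mx rmorph1.
  by move=> /(eigenvalue_CCt_gd_mx1 g_neq0 z_neq0)/spec.
- move=> [a b] [a01 b_ge1].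
  exact: (spread_CCt_le_spectral_radius e1 e2 l1_ge0 l12 l2_lt1 a01 b_ge1).
Qed.

Lemma gd_min_S10 : (0 < n1)%N -> exists v,
  is_min_on (fun g : R * R => 1 <= g.1 /\ 0 < g.2 <= 1) (fun g => rho g.1 g.2) v /\
  is_min_on (fun g1 : R => 1 <= g1) (fun g1 => rho g1 1) v.
Proof.
move=> n1_gt0.
have [l1 [l2 [e1 e2 /andP[l1_ge0 l12] l2_lt1 spec]]] := spectrum_extremes n1_gt0 CtC_spectrum.
set g := 2 / (2 - l2 - l1).
have g_ge1 : 1 <= g by rewrite /g ler_pdivlMr ?mul1r; lra.
have g_neq0 : (g%:C)%C != 0 by rewrite fmorph_eq0 gt_eqF //; lra.
apply: (is_min_on_through (e := fun a => (a, 1)) (u0 := g) (h := (l2 - l1) / (2 - l2 - l1))).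
- exact: g_ge1.
- by move=> a a_ge1; rewrite /= ltr01 lexx.
- apply: (spectral_radius_line_le l1_ge0 l12 l2_lt1 erefl) => z ez z_neq0.
  move: ez; rewrite map_gd_iter_mx rmorph1.
  by move=> /(eigenvalue_CtC_gd_mx1 g_neq0 z_neq0)/spec.
- move=> [a b] [a_ge1 b01].
  exact: (spread_CtC_le_spectral_radius e1 e2 l1_ge0 l12 l2_lt1 a_ge1 b01).
Qed.

End Regions.

Theorem mainTheorem13 (R : realType) (m n1 n2 : nat)
    (A1 : 'M[R]_(m, n1)) (A2 : 'M[R]_(m, n2)) :
  \rank (row_mx A1 A2) = (n1 + n2)%N ->
  A1^T *m A1 = 1%:M ->
  A2^T *m A2 = 1%:M ->
  A2^T *m A1 != 0 ->
  let Cm := A2^T *m A1 in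
  let rho := fun g : R * R => spectral_radius (gd_iter_mx Cm g.1 g.2) in
  is_min_on (fun g : R * R => 0 < g.1 <= 1 /\ 0 < g.2 <= 1) rho (rho (1, 1))
  /\ (exists v : R,
        is_min_on (fun g : R * R => 0 < g.1 <= 1 /\ 1 <= g.2) rho v
        /\ is_min_on (fun g2 : R => 1 <= g2) (fun g2 => rho (1, g2)) v)
  /\ (exists v : R,
        is_min_on (fun g : R * R => 1 <= g.1 /\ 0 < g.2 <= 1) rho v
        /\ is_min_on (fun g1 : R => 1 <= g1) (fun g1 => rho (g1, 1)) v).
Proof.
move=> A_full A1_iso A2_iso C_neq0 Cm rho.
have [CCt_spectrum CtC_spectrum] := real_cross_gram_spectra A_full A1_iso A2_iso.
have [n2_gt0 n1_gt0] := mx_neq0_dims C_neq0.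
split; first exact: gd_min_S00 CCt_spectrum.
by split; [exact: gd_min_S01 CCt_spectrum n2_gt0 | exact: gd_min_S10 CtC_spectrum n1_gt0].
Qed.
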